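(* Let $X_1, X_2,\ldots$ be an exchangeable sequence of Bernoulli random variables, fix $k\in\mathbb N$, $e_1,\ldots,e_k\in\{0,1\}$, $\alpha=\sum_{j=1}^k e_j$, and $N\in{}^*\mathbb N\setminus\mathbb N$, and let $Y_N=\frac{X_1+\cdots+X_N}{N}$. If $\mathbb P(X_1=e_1,\ldots,X_k=e_k)=0$, then $$\sum_{i = 0}^N {}^*\mathbb{P}\left(X_1 = e_1, \ldots, X_k = e_k \,\Big\vert\, Y_N = \tfrac{i}{N}\right) {}^*\mathbb{P}\left(Y_N = \tfrac{i}{N}\right) \approx \sum_{i = 0}^N \left(\tfrac{i}{N} \right)^{\alpha} \left(1 - \tfrac{i}{N} \right)^{k - \alpha} {}^*\mathbb{P}\left(Y_N = \tfrac{i}{N}\right),$$ where a term whose conditioning event has probability zero is taken to be $0$.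
   Context: Bernoulli means $\{0,1\}$-valued; exchangeable means every finite subcollection has the same joint law as any permutation of it. Work in a sufficiently saturated nonstandard extension; ${}^*\mathbb P$ extends $\mathbb P$, $X_1,\ldots,X_N$ are the first $N$ terms of the extended sequence. $x\approx y$ means $x-y$ is infinitesimal. *)

From Stdlib Require Import Reals Lra Lia.
Open Scope R_scope.

Fixpoint sumR (n : nat) (f : nat -> R) : R :=
  match n with
  | O => 0
  | S m => sumR m f + f m
  end.

Definition is_prob {Omega : Type} (P : (Omega -> Prop) -> R) : Prop :=
  (forall A, 0 <= P A) /\
  P (fun _ => True) = 1 /\
  (forall A B : Omega -> Prop, (forall w, ~ (A w /\ B w)) ->
      P (fun w => A w \/ B w) = P A + P B) /\
  (forall A B : Omega -> Prop, (forall w, A w <-> B w) -> P A = P B).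

(* Conditional probability, with the convention P(A | B) = 0 when P(B) = 0. *)
Definition condP {Omega : Type} (P : (Omega -> Prop) -> R)
    (A B : Omega -> Prop) : R :=
  if Req_EM_T (P B) 0 then 0 else P (fun w => A w /\ B w) / P B.

(* X : nat -> Omega -> bool; X i is the paper's X_{i+1} ({0,1}-valued,
   true = 1). *)
Definition exchangeable {Omega : Type} (P : (Omega -> Prop) -> R)
    (X : nat -> Omega -> bool) : Prop :=
  forall (n : nat) (sigma : nat -> nat),
    (forall i, (i < n)%nat -> (sigma i < n)%nat) ->
    (forall i j, (i < n)%nat -> (j < n)%nat -> sigma i = sigma j -> i = j) ->
    forall v : nat -> bool,
      P (fun w => forall i, (i < n)%nat -> X (sigma i) w = v i) =
      P (fun w => forall i, (i < n)%nat -> X i w = v i).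

Definition b2R (b : bool) : R := if b then 1 else 0.

Definition Y {Omega : Type} (X : nat -> Omega -> bool) (n : nat) (w : Omega) : R :=
  sumR n (fun t => b2R (X t w)) / INR n.

Definition cyl {Omega : Type} (X : nat -> Omega -> bool) (k : nat)
    (e : nat -> bool) (w : Omega) : Prop :=
  forall i, (i < k)%nat -> X i w = e i.

(* the two sides of the claimed approximation, as standard functions of n;
   the internal (starred) versions are obtained by evaluating them
   componentwise in the ultrapower below (transfer). *)
Definition lhs {Omega : Type} (P : (Omega -> Prop) -> R)
    (X : nat -> Omega -> bool) (k : nat) (e : nat -> bool) (n : nat) : R :=
  sumR (S n) (fun i =>
    condP P (cyl X k e) (fun w => Y X n w = INR i / INR n) *
    P (fun w => Y X n w = INR i / INR n)).

Fixpoint alpha (k : nat) (e : nat -> bool) : nat :=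
  match k with
  | O => O
  | S m => (alpha m e + (if e m then 1 else 0))%nat
  end.

Definition rhs {Omega : Type} (P : (Omega -> Prop) -> R)
    (X : nat -> Omega -> bool) (k : nat) (e : nat -> bool) (n : nat) : R :=
  sumR (S n) (fun i =>
    (INR i / INR n) ^ alpha k e *
    (1 - INR i / INR n) ^ (k - alpha k e) *
    P (fun w => Y X n w = INR i / INR n)).

Definition ultrafilter {I : Type} (U : (I -> Prop) -> Prop) : Prop :=
  U (fun _ => True) /\
  ~ U (fun _ => False) /\
  (forall A B, U A -> U B -> U (fun j => A j /\ B j)) /\
  (forall A B : I -> Prop, (forall j, A j -> B j) -> U A -> U B) /\
  (forall A : I -> Prop, U A \/ U (fun j => ~ A j)).

Definition nonstandard_nat {I : Type} (U : (I -> Prop) -> Prop)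
    (Nseq : I -> nat) : Prop :=
  forall m : nat, ~ U (fun j => Nseq j = m).

Definition approx {I : Type} (U : (I -> Prop) -> Prop) (x y : I -> R) : Prop :=
  forall eps : R, 0 < eps -> U (fun j => Rabs (x j - y j) < eps).

(* The left side vanishes termwise: each conditioning event meets the null
   cylinder {X_1 = e_1, ..., X_k = e_k} in a null set.  On the right side,
   exchangeability makes the probability of a word X_1 ... X_N depend only on
   its number of ones.  So whenever i ones and N - i zeros leave room for the
   prefix e_1 ... e_k, the level set {Y_N = i/N} is covered by words as likely
   as words beginning with e, and is null.  For every other i, either i < alpha
   or N - i < k - alpha, and then (i/N)^alpha (1 - i/N)^(k - alpha) <= k/N.
   Hence the right side lies in [0, k/N], which is infinitesimal. *)

From Stdlib Require Import Reals Lra Lia Classical.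
Open Scope R_scope.

Ltac case_eqb :=
  repeat match goal with |- context [Nat.eqb ?a ?b] => destruct (Nat.eqb_spec a b) end.

Definition swap (p q i : nat) : nat :=
  if Nat.eqb i p then q else if Nat.eqb i q then p else i.

Definition upd (v : nat -> bool) (p : nat) (b : bool) : nat -> bool :=
  fun j => if Nat.eqb j p then b else v j.

Definition perm_on (n : nat) (sigma : nat -> nat) : Prop :=
  (forall i, (i < n)%nat -> (sigma i < n)%nat) /\
  (forall i j, (i < n)%nat -> (j < n)%nat -> sigma i = sigma j -> i = j).

Lemma swap_involutive p q i : swap p q (swap p q i) = i.
Proof.
  unfold swap; destruct (Nat.eqb_spec i p), (Nat.eqb_spec i q); case_eqb; lia.
Qed.

Lemma swap_lt p q n i :
  (p < n)%nat -> (q < n)%nat -> (i < n)%nat -> (swap p q i < n)%nat.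
Proof. unfold swap; case_eqb; lia. Qed.

Lemma alpha_ext n v u :
  (forall j, (j < n)%nat -> v j = u j) -> alpha n v = alpha n u.
Proof.
  induction n as [|n IH]; intros H; simpl; auto.
  rewrite IH, H by (try intros; try apply H; lia); reflexivity.
Qed.

Lemma alpha_le n v : (alpha n v <= n)%nat.
Proof. induction n; simpl; auto; destruct (v n); lia. Qed.

Lemma alpha_upd n p v b : (p < n)%nat ->
  (alpha n (upd v p b) + (if v p then 1 else 0) =
   alpha n v + (if b then 1 else 0))%nat.
Proof.
  induction n as [|n IH]; intros Hp; [lia|]; simpl.
  destruct (Nat.eq_dec p n) as [->|Hne].
  - rewrite (alpha_ext n (upd v n b) v) by (intros j Hj; unfold upd; case_eqb; lia + auto).
    unfold upd; rewrite Nat.eqb_refl; destruct (v n), b; lia.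
  - replace (upd v p b n) with (v n) by (unfold upd; case_eqb; lia + auto).
    specialize (IH ltac:(lia)); lia.
Qed.

Lemma alpha_swap n p q v : (p < n)%nat -> (q < n)%nat ->
  alpha n (fun i => v (swap p q i)) = alpha n v.
Proof.
  intros Hp Hq; destruct (Nat.eq_dec p q) as [<-|Hpq].
  - apply alpha_ext; intros j _; unfold swap; case_eqb; subst; auto.
  - rewrite (alpha_ext n _ (upd (upd v p (v q)) q (v p)))
      by (intros j _; unfold upd, swap; case_eqb; subst; auto; lia).
    pose proof (alpha_upd n p v (v q) Hp) as Hp'.
    pose proof (alpha_upd n q (upd v p (v q)) (v p) Hq) as Hq'.
    replace (upd v p (v q) q) with (v q) in Hq' by (unfold upd; case_eqb; lia + auto).
    lia.
Qed.

Lemma alpha_const n v b :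
  (forall p, (p < n)%nat -> v p <> b) -> alpha n v = if b then O else n.
Proof.
  induction n as [|n IH]; intros H; simpl; [destruct b; auto|].
  rewrite IH by (intros; apply H; lia).
  specialize (H n ltac:(lia)); destruct b, (v n); congruence || lia.
Qed.

Lemma alpha_eq_has_value n v u :
  alpha (S n) v = alpha (S n) u -> exists p, (p < S n)%nat /\ v p = u n.
Proof.
  intros H; apply NNPP; intros Hno.
  assert (Hv : alpha (S n) v = if u n then O else S n).
  { apply alpha_const; intros p Hp E; apply Hno; eauto. }
  rewrite H in Hv; simpl in Hv; pose proof (alpha_le n u); destruct (u n); lia.
Qed.

Lemma alpha_eq_perm n : forall v u, alpha n v = alpha n u ->
  exists sigma, perm_on n sigma /\ forall i, (i < n)%nat -> v (sigma i) = u i.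
Proof.
  induction n as [|n IH]; intros v u H.
  { exists (fun i => i); split; [split|]; intros; lia. }
  destruct (alpha_eq_has_value n v u H) as [p [Hp Hvp]].
  set (v' := fun i => v (swap p n i)).
  assert (Hv'n : v' n = u n) by (unfold v', swap; case_eqb; subst; auto; lia).
  assert (Hv' : alpha n v' = alpha n u).
  { pose proof (alpha_swap (S n) p n v Hp ltac:(lia)) as Hs.
    fold v' in Hs; simpl in Hs, H; rewrite Hv'n in Hs; lia. }
  destruct (IH v' u Hv') as [s [[Hs_lt Hs_inj] Hs]].
  exists (fun i => if Nat.eqb i n then p else swap p n (s i)); split; [split|].
  - intros i Hi; case_eqb; auto.
    apply swap_lt; try lia; specialize (Hs_lt i ltac:(lia)); lia.
  - assert (Hs_ne : forall i, (i < n)%nat -> swap p n (s i) <> p).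
    { intros i Hi E; apply (f_equal (swap p n)) in E.
      rewrite swap_involutive in E; unfold swap in E; rewrite Nat.eqb_refl in E.
      specialize (Hs_lt i Hi); lia. }
    intros i j Hi Hj E.
    destruct (Nat.eqb_spec i n), (Nat.eqb_spec j n); try lia.
    + exfalso; apply (Hs_ne j); auto; lia.
    + exfalso; apply (Hs_ne i); auto; lia.
    + apply (f_equal (swap p n)) in E; rewrite !swap_involutive in E.
      apply Hs_inj; auto; lia.
  - intros i Hi; case_eqb; subst; auto; apply (Hs i); lia.
Qed.

Definition pad (k : nat) (e : nat -> bool) (m : nat) : nat -> bool :=
  fun j => if Nat.ltb j k then e j else Nat.ltb (j - k) m.

Lemma alpha_pad n k e m :
  alpha n (pad k e m) = (alpha (Nat.min n k) e + Nat.min (n - k) m)%nat.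
Proof.
  induction n as [|n IH]; [reflexivity|]; cbn [alpha]; rewrite IH; unfold pad.
  destruct (Nat.ltb_spec n k).
  - replace (Nat.min (S n) k) with (S n) by lia; replace (Nat.min n k) with n by lia.
    replace (S n - k)%nat with O by lia; replace (n - k)%nat with O by lia.
    cbn [alpha Nat.min]; lia.
  - replace (Nat.min (S n) k) with (Nat.min n k) by lia.
    replace (S n - k)%nat with (S (n - k)) by lia.
    destruct (Nat.ltb_spec (n - k) m); lia.
Qed.

Lemma sumR_b2R (b : nat -> bool) n : sumR n (fun t => b2R (b t)) = INR (alpha n b).
Proof.
  induction n as [|n IH]; simpl; auto.
  rewrite IH, plus_INR; unfold b2R; destruct (b n); simpl; lra.
Qed.

Lemma Y_eq_iff {Omega} (X : nat -> Omega -> bool) n i w : (1 <= n)%nat ->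
  Y X n w = INR i / INR n <-> alpha n (fun t => X t w) = i.
Proof.
  intros Hn; unfold Y; rewrite sumR_b2R.
  assert (INR n <> 0) by (apply not_0_INR; lia).
  split; [|intros ->; reflexivity].
  intros E; apply INR_eq, (Rdiv_eq_reg_r (INR n)); auto.
Qed.

Lemma sumR_le n f g :
  (forall i, (i < n)%nat -> f i <= g i) -> sumR n f <= sumR n g.
Proof.
  induction n as [|n IH]; simpl; intros H; [lra|].
  pose proof (H n ltac:(lia)); pose proof (IH ltac:(intros; apply H; lia)); lra.
Qed.

Lemma sumR_scal n c f : sumR n (fun i => c * f i) = c * sumR n f.
Proof. induction n as [|n IH]; simpl; [|rewrite IH]; lra. Qed.

Lemma sumR_zero n f : (forall i, (i < n)%nat -> f i = 0) -> sumR n f = 0.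
Proof.
  induction n as [|n IH]; simpl; intros H; [lra|].
  rewrite IH, H by (try intros; try apply H; lia); lra.
Qed.

Lemma INR_ratio_le a b n :
  (1 <= n)%nat -> (a <= b)%nat -> INR a / INR n <= INR b / INR n.
Proof.
  intros Hn Hab; unfold Rdiv; apply Rmult_le_compat_r, le_INR; auto.
  left; apply Rinv_0_lt_compat, lt_0_INR; lia.
Qed.

Lemma INR_ratio_bounds i n :
  (1 <= n)%nat -> (i <= n)%nat -> 0 <= INR i / INR n <= 1.
Proof.
  intros Hn Hi; split.
  - rewrite <- (Rdiv_0_l (INR n)), <- INR_0; apply INR_ratio_le; lia.
  - rewrite <- (Rdiv_diag (INR n)) by (apply not_0_INR; lia); apply INR_ratio_le; lia.
Qed.

Lemma pow_le_base y m : 0 <= y <= 1 -> (1 <= m)%nat -> y ^ m <= y.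
Proof.
  intros Hy Hm; destruct m as [|m]; [lia|]; simpl.
  pose proof (pow_incr y 1 m ltac:(lra)); rewrite pow1 in *.
  pose proof (pow_le y m (proj1 Hy)); nra.
Qed.

(* Outside the admissible range one of the two factors has an exponent
   exceeding the corresponding count ([i] ones, [n - i] zeros), so that
   factor is at most [k / n]. *)
Lemma bernstein_weight_le k a n i :
  (1 <= n)%nat -> (i <= n)%nat -> (a <= k)%nat -> (i < a \/ n - i < k - a)%nat ->
  (INR i / INR n) ^ a * (1 - INR i / INR n) ^ (k - a) <= INR k / INR n.
Proof.
  intros Hn Hi Hak Hout.
  set (y := INR i / INR n).
  assert (Hy : 0 <= y <= 1) by (apply INR_ratio_bounds; auto).
  assert (Hz : 1 - y = INR (n - i) / INR n).
  { unfold y; rewrite minus_INR by auto; field; apply not_0_INR; lia. }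
  assert (H1y : 0 <= 1 - y <= 1) by lra.
  pose proof (pow_le y a (proj1 Hy)); pose proof (pow_le (1 - y) (k - a) (proj1 H1y)).
  pose proof (pow_incr y 1 a ltac:(lra)); pose proof (pow_incr (1 - y) 1 (k - a) ltac:(lra)).
  rewrite pow1 in *.
  destruct Hout as [Hia|Hia].
  - pose proof (pow_le_base y a Hy ltac:(lia)).
    assert (y <= INR k / INR n) by (apply INR_ratio_le; lia); nra.
  - pose proof (pow_le_base (1 - y) (k - a) H1y ltac:(lia)).
    assert (1 - y <= INR k / INR n) by (rewrite Hz; apply INR_ratio_le; lia); nra.
Qed.

Section Probability.
Context {Omega : Type} (P : (Omega -> Prop) -> R) (HP : is_prob P).

Lemma P_ext A B : (forall w, A w <-> B w) -> P A = P B.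
Proof. apply HP. Qed.

Lemma P_nonneg A : 0 <= P A.
Proof. apply HP. Qed.

Lemma P_add A B :
  (forall w, ~ (A w /\ B w)) -> P (fun w => A w \/ B w) = P A + P B.
Proof. apply HP. Qed.

Lemma P_empty : P (fun _ => False) = 0.
Proof.
  pose proof (P_add (fun _ => False) (fun _ => False) ltac:(tauto)) as H.
  rewrite (P_ext _ (fun _ => False)) in H by tauto; lra.
Qed.

Lemma P_mono A B : (forall w, A w -> B w) -> P A <= P B.
Proof.
  intros H; rewrite (P_ext B (fun w => A w \/ (B w /\ ~ A w))).
  - rewrite P_add by tauto; pose proof (P_nonneg (fun w => B w /\ ~ A w)); lra.
  - intros w; split; [|firstorder]; intros Hb; destruct (classic (A w)); tauto.
Qed.

Lemma P_le1 A : P A <= 1.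
Proof. destruct HP as [_ [H1 _]]; rewrite <- H1; apply P_mono; auto. Qed.

Lemma P_null_sub A B : (forall w, A w -> B w) -> P B = 0 -> P A = 0.
Proof. intros H HB; pose proof (P_mono A B H); pose proof (P_nonneg A); lra. Qed.

Lemma sumR_P_disjoint (E : nat -> Omega -> Prop) m :
  (forall i j w, i <> j -> E i w -> E j w -> False) ->
  sumR m (fun i => P (E i)) = P (fun w => exists i, (i < m)%nat /\ E i w).
Proof.
  intros Hd; induction m as [|m IH]; simpl.
  - rewrite <- P_empty; apply P_ext; intros w; split; [tauto|intros [i [Hi _]]; lia].
  - rewrite IH, <- P_add.
    + apply P_ext; intros w; split.
      * intros [[i [Hi Ei]]|Em]; [exists i|exists m]; split; auto; lia.
      * intros [i [Hi Ei]]; destruct (Nat.eq_dec i m) as [->|]; auto.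
        left; exists i; split; auto; lia.
    + intros w [[i [Hi Ei]] Em]; apply (Hd i m w); auto; lia.
Qed.

Variable X : nat -> Omega -> bool.

(* The events [cyl X n v] partition Omega, so [B] is null once all its
   pieces are; we split on the first coordinates one at a time. *)
Lemma P_null_of_cyl_null n B :
  (forall v, P (fun w => B w /\ cyl X n v w) = 0) -> P B = 0.
Proof.
  intros H.
  assert (G : forall d m v, (m + d = n)%nat -> P (fun w => B w /\ cyl X m v w) = 0).
  { induction d as [|d IH]; intros m v Hm.
    - replace m with n by lia; apply H.
    - rewrite (P_ext _ (fun w => (B w /\ cyl X (S m) (upd v m true) w) \/
                                 (B w /\ cyl X (S m) (upd v m false) w))).
      + rewrite P_add; [rewrite !IH by lia; lra|].
        intros w [[_ H1] [_ H2]]; specialize (H1 m ltac:(lia)); specialize (H2 m ltac:(lia)).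
        unfold upd in *; rewrite Nat.eqb_refl in *; congruence.
      + unfold cyl, upd; intros w; split.
        * intros [Hb Hj]; destruct (X m w) eqn:Hx; [left|right]; split; auto;
            intros j Hj'; case_eqb; subst; auto; apply Hj; lia.
        * intros [[Hb Hj]|[Hb Hj]]; split; auto; intros j Hj';
            specialize (Hj j ltac:(lia)); revert Hj; case_eqb; auto; lia. }
  rewrite (P_ext B (fun w => B w /\ cyl X 0 (fun _ => true) w)).
  - apply (G n); lia.
  - unfold cyl; intros w; split; [|tauto]; intros; split; auto; intros; lia.
Qed.

Hypothesis Hex : exchangeable P X.

Lemma exchangeable_cyl_le n v u :
  alpha n v = alpha n u -> P (cyl X n v) <= P (cyl X n u).
Proof.
  intros H; destruct (alpha_eq_perm n v u H) as [sigma [[Hlt Hinj] Hvu]].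
  unfold cyl; rewrite <- (Hex n sigma Hlt Hinj u); apply P_mono.
  intros w Hw i Hi; rewrite <- Hvu by auto; apply Hw, Hlt, Hi.
Qed.

Lemma exchangeable_cyl_eq n v u :
  alpha n v = alpha n u -> P (cyl X n v) = P (cyl X n u).
Proof. intros H; apply Rle_antisym; apply exchangeable_cyl_le; auto. Qed.

End Probability.

Section Sides.
Context {Omega : Type} (P : (Omega -> Prop) -> R) (HP : is_prob P)
  (X : nat -> Omega -> bool) (k : nat) (e : nat -> bool)
  (Hnull : P (cyl X k e) = 0).

Lemma lhs_null n : lhs P X k e n = 0.
Proof.
  unfold lhs, condP; apply sumR_zero; intros i _.
  destruct (Req_EM_T _ _); [lra|].
  rewrite (P_null_sub P HP _ (cyl X k e)); [unfold Rdiv; lra|tauto|exact Hnull].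
Qed.

(* If [i] ones leave room for the pattern [e] in front, then by
   exchangeability every word with [i] ones is as likely as one that starts
   with [e]. *)
Lemma level_set_null (Hex : exchangeable P X) n i :
  (1 <= n)%nat -> (alpha k e <= i <= n)%nat -> (k - alpha k e <= n - i)%nat ->
  P (fun w => Y X n w = INR i / INR n) = 0.
Proof.
  intros Hn Hi Hki.
  apply (P_null_of_cyl_null P HP X n); intros v.
  destruct (Nat.eq_dec (alpha n v) i) as [Hv|Hv].
  - set (u := pad k e (i - alpha k e)).
    assert (Hu : alpha n u = i).
    { unfold u; rewrite alpha_pad; replace (Nat.min n k) with k by lia; lia. }
    apply (P_null_sub P HP _ (cyl X n v)); [tauto|].
    rewrite (exchangeable_cyl_eq P HP X Hex n v u) by lia.
    apply (P_null_sub P HP _ (cyl X k e)); auto.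
    intros w Hw j Hj; rewrite Hw by lia; unfold u, pad.
    destruct (Nat.ltb_spec j k); [reflexivity|lia].
  - apply (P_null_sub P HP _ (fun _ => False)); [|apply P_empty; auto].
    intros w [Hy Hw]; apply Hv; rewrite Y_eq_iff in Hy by auto.
    rewrite <- Hy; apply alpha_ext; intros j Hj; symmetry; apply Hw, Hj.
Qed.

Lemma rhs_bounds (Hex : exchangeable P X) n :
  (1 <= n)%nat -> 0 <= rhs P X k e n <= INR k / INR n.
Proof.
  intros Hn.
  set (E := fun i w => Y X n w = INR i / INR n).
  assert (Hkn : 0 <= INR k / INR n)
    by (rewrite <- (Rdiv_0_l (INR n)), <- INR_0; apply INR_ratio_le; lia).
  split.
  - rewrite <- (sumR_zero (S n) (fun _ => 0)) by auto.
    apply sumR_le; intros i Hi.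
    pose proof (INR_ratio_bounds i n Hn ltac:(lia)).
    apply Rmult_le_pos; [apply Rmult_le_pos; apply pow_le; lra|apply P_nonneg, HP].
  - apply Rle_trans with (sumR (S n) (fun i => INR k / INR n * P (E i))).
    + apply sumR_le; intros i Hi; unfold E.
      destruct (Nat.le_gt_cases (alpha k e) i), (Nat.le_gt_cases (k - alpha k e) (n - i)).
      1: rewrite (level_set_null Hex n i) by lia; lra.
      all: apply Rmult_le_compat_r; [apply P_nonneg, HP|].
      all: apply bernstein_weight_le; try apply alpha_le; lia.
    + rewrite sumR_scal, (sumR_P_disjoint P HP E).
      * pose proof (P_le1 P HP (fun w => exists i, (i < S n)%nat /\ E i w)); nra.
      * intros i j w Hij Ei Ej; unfold E in *.
        rewrite Y_eq_iff in Ei, Ej by auto; congruence.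
Qed.

End Sides.

Lemma nonstandard_nat_ge {J : Type} (U : (J -> Prop) -> Prop) (Nseq : J -> nat) :
  ultrafilter U -> nonstandard_nat U Nseq -> forall m, U (fun j => (m <= Nseq j)%nat).
Proof.
  intros [UT [_ [UI [UM UC]]]] HN m; induction m as [|m IH].
  - apply (UM (fun _ => True)); auto; intros; lia.
  - assert (Hne : U (fun j => Nseq j <> m)) by (destruct (UC (fun j => Nseq j = m)); [exfalso; eapply HN; eauto|auto]).
    apply (UM (fun j => (m <= Nseq j)%nat /\ Nseq j <> m)); [intros; lia|]; auto.
Qed.

Lemma INR_ratio_eventually_lt k eps : 0 < eps ->
  exists M, (1 <= M)%nat /\ forall n, (M <= n)%nat -> INR k / INR n < eps.
Proof.
  intros Heps; destruct (INR_archimed eps (INR k) Heps) as [M HM].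
  exists (S M); split; [lia|]; intros n Hn.
  assert (0 < INR n) by (apply lt_0_INR; lia).
  assert (INR M <= INR n) by (apply le_INR; lia).
  apply Rmult_lt_reg_r with (INR n); auto.
  unfold Rdiv; rewrite Rmult_assoc, Rinv_l by lra; nra.
Qed.

Theorem mainTheorem6
  (Omega : Type) (P : (Omega -> Prop) -> R) (X : nat -> Omega -> bool)
  (HP : is_prob P) (Hex : exchangeable P X)
  (k : nat) (e : nat -> bool)
  (I : Type) (U : (I -> Prop) -> Prop) (HU : ultrafilter U)
  (Nseq : I -> nat) (HN : nonstandard_nat U Nseq)
  (H0 : P (cyl X k e) = 0) :
  approx U (fun j => lhs P X k e (Nseq j)) (fun j => rhs P X k e (Nseq j)).
Proof.
  intros eps Heps.
  destruct (INR_ratio_eventually_lt k eps Heps) as [M [HM1 HM]].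
  pose proof (nonstandard_nat_ge U Nseq HU HN M) as HNM.
  destruct HU as [_ [_ [_ [U_mono _]]]].
  refine (U_mono _ _ _ HNM); intros j Hj.
  rewrite (lhs_null P HP X k e H0), Rminus_0_l, Rabs_Ropp.
  pose proof (rhs_bounds P HP X k e H0 Hex (Nseq j) ltac:(lia)).
  pose proof (HM (Nseq j) Hj).
  rewrite Rabs_right by lra; lra.
Qed.
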